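(* Consider two linear classifiers $h_1(x)=\mathbf 1(w_1^\top x\ge0)$ and $h_2(x)=\mathbf 1(w_2^\top x\ge0)$ on $\mathbb R^2$ with $\|w_i\|_2=1$, and an agent $x^{(0)}\in\mathbb R^2$ with $h_1(x^{(0)})=0$ and $h_2(P_{w_1}(x^{(0)}))=0$. Let $0<\theta<\pi$ satisfy $\cos\theta=-w_1^\top w_2$. Then, for sequential manipulation with Euclidean cost: 1. If $|\tan\theta|>\|P_{w_1}(x^{(0)})\|_2/d_{w_1}(x^{(0)})$, the best response is $x^{(2)}=x^{(1)}=\vec 0$, and $c^*_{\mathrm{seq}}(x^{(0)},\{h_1,h_2\})=\|x^{(0)}\|_2$. 2. If $|\tan\theta|\le\|P_{w_1}(x^{(0)})\|_2/d_{w_1}(x^{(0)})$, the best response is $$x^{(1)}=\Big(1-\frac{d_{w_1}(x^{(0)})}{\|P_{w_1}(x^{(0)})\|_2}|\tan\theta|\Big)P_{w_1}(x^{(0)}),\qquad x^{(2)}=P_{w_2}(x^{(1)}),$$ and $c^*_{\mathrm{seq}}(x^{(0)},\{h_1,h_2\})=d_{w_1}(x^{(0)})|\cos\theta|+\|P_{w_1}(x^{(0)})\|_2\sin\theta$.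
   Context: For a unit vector $w\in\mathbb R^2$: $P_w(x)=x$ if $w^\top x\ge0$ and $P_w(x)=x-(w^\top x)w$ otherwise (projection onto $\{y:w^\top y\ge0\}$); $d_w(x)=0$ if $w^\top x\ge0$ and $d_w(x)=|w^\top x|$ otherwise. The sequential manipulation cost is $c^*_{\mathrm{seq}}(x^{(0)},\{h_1,h_2\})=\min\{\|x^{(1)}-x^{(0)}\|_2+\|x^{(2)}-x^{(1)}\|_2:h_1(x^{(1)})=1,h_2(x^{(2)})=1\}$, and the best response is a minimizing pair $(x^{(1)},x^{(2)})$. *)

From Stdlib Require Import Reals.
Open Scope R_scope.

Definition pt := (R * R)%type.
Definition dot (u v : pt) : R := fst u * fst v + snd u * snd v.
Definition norm2 (u : pt) : R := sqrt (dot u u).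
Definition vadd (u v : pt) : pt := (fst u + fst v, snd u + snd v).
Definition vsub (u v : pt) : pt := (fst u - fst v, snd u - snd v).
Definition vscale (a : R) (u : pt) : pt := (a * fst u, a * snd u).
Definition vzero : pt := (0, 0).

Definition lin_clf (w : pt) (x : pt) : R := if Rle_dec 0 (dot w x) then 1 else 0.

Definition Pw (w x : pt) : pt :=
  if Rle_dec 0 (dot w x) then x else vsub x (vscale (dot w x) w).

Definition dw (w x : pt) : R :=
  if Rle_dec 0 (dot w x) then 0 else Rabs (dot w x).

Definition seq_feasible (h1 h2 : pt -> R) (x1 x2 : pt) : Prop :=
  h1 x1 = 1 /\ h2 x2 = 1.
Definition seq_cost (x0 x1 x2 : pt) : R :=
  norm2 (vsub x1 x0) + norm2 (vsub x2 x1).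

Definition is_best_response (h1 h2 : pt -> R) (x0 x1 x2 : pt) : Prop :=
  seq_feasible h1 h2 x1 x2 /\
  forall y1 y2, seq_feasible h1 h2 y1 y2 -> seq_cost x0 x1 x2 <= seq_cost x0 y1 y2.

Definition cseq_is (h1 h2 : pt -> R) (x0 : pt) (c : R) : Prop :=
  (exists x1 x2, seq_feasible h1 h2 x1 x2 /\ seq_cost x0 x1 x2 = c) /\
  forall y1 y2, seq_feasible h1 h2 y1 y2 -> c <= seq_cost x0 y1 y2.

From Stdlib Require Import Reals Lra.
Open Scope R_scope.

(* Both cost formulas are certified by weak duality.  If [w1.y1 >= 0],
   [w2.y2 >= 0], [l, m >= 0], [|m w2| <= 1] and [g = l w1 + m w2] has
   [|g| <= 1], then Cauchy-Schwarz on the two legs gives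
   [|y1 - x0| + |y2 - y1| >= g.(y1 - x0) + m w2.(y2 - y1) >= - g.x0].
   With [d = d_{w1}(x0)], [p = P_{w1}(x0)], [a = |p|] and, in the plane,
   [w2.p = - a sin theta], the choice [(l, m) = (|cos theta| + cos theta, 1)]
   gives the lower bound [d |cos theta| + a sin theta], attained by the pair
   of case 2; when [a |cos theta| < d sin theta] another [(l, m)] with
   [|g| = 1] gives the lower bound [|x0|], attained by moving to the origin. *)

Definition cross (u v : pt) : R := fst u * snd v - snd u * fst v.

Lemma dot_comm (u v : pt) : dot u v = dot v u.
Proof. unfold dot; ring. Qed.

Lemma dot_vaddr (u v z : pt) : dot u (vadd v z) = dot u v + dot u z.
Proof. unfold dot, vadd; simpl; ring. Qed.

Lemma dot_vaddl (u v z : pt) : dot (vadd u v) z = dot u z + dot v z.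
Proof. unfold dot, vadd; simpl; ring. Qed.

Lemma dot_vsubr (u v z : pt) : dot u (vsub v z) = dot u v - dot u z.
Proof. unfold dot, vsub; simpl; ring. Qed.

Lemma dot_vscaler (k : R) (u v : pt) : dot u (vscale k v) = k * dot u v.
Proof. unfold dot, vscale; simpl; ring. Qed.

Lemma dot_vscalel (k : R) (u v : pt) : dot (vscale k u) v = k * dot u v.
Proof. unfold dot, vscale; simpl; ring. Qed.

Lemma dot_vzeror (u : pt) : dot u vzero = 0.
Proof. unfold dot, vzero; simpl; ring. Qed.

Lemma dot_self_ge0 (u : pt) : 0 <= dot u u.
Proof. unfold dot; nra. Qed.

Lemma dot_sqr_add_cross_sqr (u v : pt) :
  dot u v * dot u v + cross u v * cross u v = dot u u * dot v v.
Proof. unfold dot, cross; ring. Qed.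

Lemma dot_mul_decomp (u v z : pt) :
  dot u u * dot v z = dot u v * dot u z + cross u v * cross u z.
Proof. unfold dot, cross; ring. Qed.

Lemma norm2_sqr (u : pt) : norm2 u * norm2 u = dot u u.
Proof. apply sqrt_sqrt, dot_self_ge0. Qed.

Lemma norm2_ge0 (u : pt) : 0 <= norm2 u.
Proof. apply sqrt_pos. Qed.

Lemma norm2_eq_of_sqr (u : pt) (r : R) : 0 <= r -> dot u u = r * r -> norm2 u = r.
Proof. intros Hr Hu; unfold norm2; rewrite Hu; apply sqrt_square, Hr. Qed.

Lemma dot_unit (w : pt) : norm2 w = 1 -> dot w w = 1.
Proof. intros Hw; rewrite <- norm2_sqr, Hw; ring. Qed.

Lemma dot_le_norm2_mul (u v : pt) : dot u v <= norm2 u * norm2 v.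
Proof.
  unfold norm2; rewrite <- sqrt_mult by apply dot_self_ge0.
  destruct (Rle_lt_dec (dot u v) 0) as [Hle|Hlt].
  - pose proof (sqrt_pos (dot u u * dot v v)); lra.
  - rewrite <- (sqrt_square (dot u v)) by lra.
    apply sqrt_le_1_alt; rewrite <- dot_sqr_add_cross_sqr.
    pose proof (Rle_0_sqr (cross u v)); unfold Rsqr in *; lra.
Qed.

Lemma dot_le_norm2 (g z : pt) : dot g g <= 1 -> dot g z <= norm2 z.
Proof.
  intros Hg.
  assert (Hng : norm2 g <= 1) by (rewrite <- sqrt_1; apply sqrt_le_1_alt, Hg).
  pose proof (dot_le_norm2_mul g z); pose proof (norm2_ge0 z); nra.
Qed.

Lemma lin_clf_1 (w y : pt) : lin_clf w y = 1 <-> 0 <= dot w y.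
Proof. unfold lin_clf; destruct (Rle_dec 0 (dot w y)); split; lra. Qed.

Lemma lin_clf_0 (w y : pt) : lin_clf w y = 0 -> dot w y < 0.
Proof. unfold lin_clf; destruct (Rle_dec 0 (dot w y)); lra. Qed.

Lemma Pw_neg (w x : pt) : dot w x < 0 -> Pw w x = vsub x (vscale (dot w x) w).
Proof. unfold Pw; destruct (Rle_dec 0 (dot w x)); [lra | reflexivity]. Qed.

Lemma dw_nonpos (w x : pt) : dot w x <= 0 -> dw w x = - dot w x.
Proof.
  unfold dw; destruct (Rle_dec 0 (dot w x)); [lra|].
  intros; apply Rabs_left; lra.
Qed.

Lemma dot_Pw_neg (w x : pt) : dot w w = 1 -> dot w x < 0 -> dot w (Pw w x) = 0.
Proof.
  intros Hw Hx; rewrite Pw_neg by exact Hx.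
  rewrite dot_vsubr, dot_vscaler, Hw; ring.
Qed.

Lemma lin_clf_Pw (w x : pt) : dot w w = 1 -> lin_clf w (Pw w x) = 1.
Proof.
  intros Hw; apply lin_clf_1.
  destruct (Rle_lt_dec 0 (dot w x)) as [Hx|Hx].
  - unfold Pw; destruct (Rle_dec 0 (dot w x)); lra.
  - rewrite dot_Pw_neg by assumption; lra.
Qed.

Lemma norm2_vsub_Pw (w x : pt) : dot w w = 1 -> norm2 (vsub (Pw w x) x) = dw w x.
Proof.
  intros Hw; unfold Pw, dw; destruct (Rle_dec 0 (dot w x)) as [Hx|Hx].
  - apply norm2_eq_of_sqr; [lra|]; unfold dot, vsub; simpl; ring.
  - apply norm2_eq_of_sqr; [apply Rabs_pos|].
    rewrite <- Rabs_mult, Rabs_pos_eq by nra.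
    replace (vsub (vsub x (vscale (dot w x) w)) x) with (vscale (- dot w x) w)
      by (unfold vsub, vscale; simpl; f_equal; ring).
    rewrite dot_vscalel, dot_vscaler, Hw; ring.
Qed.

Lemma seq_cost_vzero (x0 : pt) : seq_cost x0 vzero vzero = norm2 x0.
Proof.
  unfold seq_cost.
  rewrite (norm2_eq_of_sqr (vsub vzero vzero) 0) by (unfold dot, vsub; simpl; lra || ring).
  rewrite Rplus_0_r; unfold norm2; f_equal; unfold dot, vsub; simpl; ring.
Qed.

Lemma seq_cost_ge_dual (w1 w2 x0 y1 y2 : pt) (l m : R) :
  0 <= l -> 0 <= m ->
  dot (vscale m w2) (vscale m w2) <= 1 ->
  dot (vadd (vscale l w1) (vscale m w2)) (vadd (vscale l w1) (vscale m w2)) <= 1 ->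
  lin_clf w1 y1 = 1 -> lin_clf w2 y2 = 1 ->
  - dot (vadd (vscale l w1) (vscale m w2)) x0 <= seq_cost x0 y1 y2.
Proof.
  intros Hl Hm Hmw2 Hg Hy1 Hy2.
  apply lin_clf_1 in Hy1; apply lin_clf_1 in Hy2.
  set (g := vadd (vscale l w1) (vscale m w2)) in *.
  pose proof (dot_le_norm2 g (vsub y1 x0) Hg) as Hleg1.
  pose proof (dot_le_norm2 (vscale m w2) (vsub y2 y1) Hmw2) as Hleg2.
  assert (Hsplit : dot g (vsub y1 x0) + dot (vscale m w2) (vsub y2 y1)
                   = l * dot w1 y1 + m * dot w2 y2 - dot g x0)
    by (unfold g, dot, vadd, vsub, vscale; simpl; ring).
  pose proof (Rmult_le_pos _ _ Hl Hy1); pose proof (Rmult_le_pos _ _ Hm Hy2).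
  unfold seq_cost; lra.
Qed.

Lemma best_response_of_lower_bound (h1 h2 : pt -> R) (x0 x1 x2 : pt) (c : R) :
  seq_feasible h1 h2 x1 x2 -> seq_cost x0 x1 x2 = c ->
  (forall y1 y2, seq_feasible h1 h2 y1 y2 -> c <= seq_cost x0 y1 y2) ->
  is_best_response h1 h2 x0 x1 x2 /\ cseq_is h1 h2 x0 c.
Proof.
  intros Hfeas Hcost Hlb; repeat split; try apply Hfeas.
  - intros y1 y2 Hy; rewrite Hcost; apply Hlb, Hy.
  - exists x1, x2; split; assumption.
  - exact Hlb.
Qed.

Lemma Rabs_tan (t : R) : 0 < sin t -> Rabs (tan t) = sin t / Rabs (cos t).
Proof.
  intros Hs; unfold tan, Rdiv; rewrite Rabs_mult, Rabs_inv, (Rabs_pos_eq (sin t)) by lra.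
  reflexivity.
Qed.

Lemma lt_of_Rabs_tan_gt (t a d : R) : 0 < d -> 0 < sin t ->
  (cos t = 0 \/ Rabs (tan t) > a / d) -> a * Rabs (cos t) < d * sin t.
Proof.
  intros Hd Hs [Hc|Ht].
  - rewrite Hc, Rabs_R0; nra.
  - rewrite Rabs_tan in Ht by exact Hs.
    destruct (Req_dec (cos t) 0) as [Hc|Hc]; [rewrite Hc, Rabs_R0; nra|].
    pose proof (Rabs_pos_lt _ Hc) as HC.
    apply Rgt_lt, (Rmult_lt_compat_r (d * Rabs (cos t))) in Ht; [|nra].
    replace (a / d * (d * Rabs (cos t))) with (a * Rabs (cos t)) in Ht by (field; lra).
    replace (sin t / Rabs (cos t) * (d * Rabs (cos t))) with (d * sin t) in Ht
      by (field; lra).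
    exact Ht.
Qed.

Lemma le_of_Rabs_tan_le (t a d : R) : 0 < d -> 0 < sin t -> cos t <> 0 ->
  Rabs (tan t) <= a / d -> d * sin t <= a * Rabs (cos t).
Proof.
  intros Hd Hs Hc Ht; rewrite Rabs_tan in Ht by exact Hs.
  pose proof (Rabs_pos_lt _ Hc) as HC.
  apply (Rmult_le_compat_r (d * Rabs (cos t))) in Ht; [|nra].
  replace (a / d * (d * Rabs (cos t))) with (a * Rabs (cos t)) in Ht by (field; lra).
  replace (sin t / Rabs (cos t) * (d * Rabs (cos t))) with (d * sin t) in Ht
    by (field; lra).
  exact Ht.
Qed.

Lemma origin_certificate (a d r S C : R) :
  0 < a -> 0 < d -> 0 < S -> S * S + C * C = 1 -> 0 <= r -> r * r = a * a + d * d ->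
  a * Rabs C < d * S ->
  exists l m, 0 <= l /\ 0 <= m <= 1 /\ l * l - 2 * l * m * C + m * m <= 1 /\
              l * d + m * (a * S - d * C) = r.
Proof.
  intros Ha Hd HS HSC Hr Hr2 Hcond.
  assert (HCabs : - Rabs C <= C)
    by (pose proof (Rle_abs (- C)); rewrite Rabs_Ropp in *; lra).
  assert (HC2 : Rabs C * Rabs C = C * C) by (rewrite <- Rabs_mult; apply Rabs_pos_eq; nra).
  assert (Hr0 : 0 < r) by nra.
  assert (HaC : a * a * (C * C) <= d * d * (S * S))
    by (pose proof (Rabs_pos C); rewrite <- HC2;
        assert (0 <= a * Rabs C) by nra; nra).
  assert (HrS : 0 < r * S) by nra.
  exists ((d * S + a * C) / (r * S)), (a / (r * S)); repeat split.
  - apply Rlt_le, Rdiv_lt_0_compat; nra.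
  - apply Rlt_le, Rdiv_lt_0_compat; lra.
  - apply (Rmult_le_reg_r (r * S)); [exact HrS|].
    replace (a / (r * S) * (r * S)) with a by (field; lra).
    apply Rsqr_incr_0_var; unfold Rsqr; nra.
  - right; field_simplify_eq; [|lra]. nra.
  - field_simplify_eq; [|lra]. nra.
Qed.

Section Configuration.

Variables (w1 w2 x0 : pt) (theta : R).
Hypotheses (Hw1 : dot w1 w1 = 1) (Hw2 : dot w2 w2 = 1)
  (Hx0 : dot w1 x0 < 0) (Hpx0 : dot w2 (Pw w1 x0) < 0)
  (Htheta : 0 < theta < PI) (Hcos : cos theta = - dot w1 w2).

Local Notation p := (Pw w1 x0).
Local Notation d := (dw w1 x0).
Local Notation a := (norm2 (Pw w1 x0)).

Lemma d_eq : d = - dot w1 x0.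
Proof. apply dw_nonpos; lra. Qed.

Lemma d_pos : 0 < d.
Proof. rewrite d_eq; lra. Qed.

Lemma vsub_x0 (v : pt) : vsub v x0 = vadd (vsub v p) (vscale d w1).
Proof. rewrite (Pw_neg _ _ Hx0), d_eq; unfold vadd, vsub, vscale; simpl; f_equal; ring. Qed.

Lemma dot_w1_p : dot w1 p = 0.
Proof. apply dot_Pw_neg; assumption. Qed.

Lemma sin_pos : 0 < sin theta.
Proof. apply sin_gt_0; lra. Qed.

Lemma sin_cos_sqr : sin theta * sin theta + cos theta * cos theta = 1.
Proof. pose proof (sin2_cos2 theta); unfold Rsqr in *; lra. Qed.

(* [w2.p] is [cross w1 w2 * cross w1 p] because [p] is orthogonal to the unit
   vector [w1]; the two cross products have absolute values [sin theta] and [a]. *)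
Lemma dot_w2_p : dot w2 p = - a * sin theta.
Proof.
  assert (HB : dot w2 p = cross w1 w2 * cross w1 p).
  { pose proof (dot_mul_decomp w1 w2 p) as E; rewrite Hw1, dot_w1_p in E; lra. }
  assert (Hc12 : cross w1 w2 * cross w1 w2 = sin theta * sin theta).
  { pose proof (dot_sqr_add_cross_sqr w1 w2); pose proof sin_cos_sqr; nra. }
  assert (Hc1p : cross w1 p * cross w1 p = a * a).
  { pose proof (dot_sqr_add_cross_sqr w1 p) as E.
    rewrite dot_w1_p, Hw1, <- norm2_sqr in E; lra. }
  assert (HaS : 0 <= a * sin theta) by (pose proof sin_pos; pose proof (norm2_ge0 p); nra).
  assert (Hsq : (dot w2 p + a * sin theta) * (dot w2 p - a * sin theta) = 0)
    by (rewrite HB; nra).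
  apply Rmult_integral in Hsq; destruct Hsq; lra.
Qed.

Lemma a_pos : 0 < a.
Proof.
  pose proof dot_w2_p as HB; pose proof (norm2_ge0 p).
  destruct (Req_dec a 0) as [Ha|Ha]; [rewrite Ha in HB; lra | lra].
Qed.

Lemma dot_w2_x0 : dot w2 x0 = - a * sin theta + d * cos theta.
Proof.
  replace (dot w2 x0) with (dot w2 p - dot w2 (vsub p x0))
    by (rewrite dot_vsubr; ring).
  rewrite vsub_x0, dot_vaddr, dot_vsubr, dot_vscaler, dot_w2_p, Hcos, (dot_comm w2 w1).
  ring.
Qed.

Lemma norm2_x0_sqr : norm2 x0 * norm2 x0 = a * a + d * d.
Proof.
  assert (Hneg : vsub vzero x0 = vadd (vscale (-1) p) (vscale d w1)).
  { rewrite vsub_x0; unfold vadd, vsub, vscale, vzero; simpl; f_equal; ring. }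
  replace (norm2 x0 * norm2 x0) with (dot (vsub vzero x0) (vsub vzero x0))
    by (rewrite norm2_sqr; unfold dot, vsub, vzero; simpl; ring).
  rewrite Hneg, !dot_vaddl, !dot_vaddr, !dot_vscalel, !dot_vscaler.
  rewrite (dot_comm p w1), dot_w1_p, Hw1, <- norm2_sqr; ring.
Qed.

Lemma seq_cost_ge_certificate (l m : R) (y1 y2 : pt) :
  0 <= l -> 0 <= m <= 1 -> l * l - 2 * l * m * cos theta + m * m <= 1 ->
  seq_feasible (lin_clf w1) (lin_clf w2) y1 y2 ->
  l * d + m * (a * sin theta - d * cos theta) <= seq_cost x0 y1 y2.
Proof.
  intros Hl Hm Hg [Hy1 Hy2].
  replace (l * d + m * (a * sin theta - d * cos theta))
    with (- dot (vadd (vscale l w1) (vscale m w2)) x0)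
    by (rewrite dot_vaddl, !dot_vscalel, dot_w2_x0, d_eq; ring).
  apply seq_cost_ge_dual; [exact Hl | lra | | | exact Hy1 | exact Hy2].
  - rewrite dot_vscalel, dot_vscaler, Hw2; nra.
  - rewrite !dot_vaddl, !dot_vaddr, !dot_vscalel, !dot_vscaler, Hw1, Hw2,
      (dot_comm w2 w1), Hcos in *; lra.
Qed.

Lemma norm2_x0_le_seq_cost (y1 y2 : pt) :
  a * Rabs (cos theta) < d * sin theta ->
  seq_feasible (lin_clf w1) (lin_clf w2) y1 y2 -> norm2 x0 <= seq_cost x0 y1 y2.
Proof.
  intros Hcond Hy.
  destruct (origin_certificate a d (norm2 x0) (sin theta) (cos theta) a_pos d_pos sin_pos
              sin_cos_sqr (norm2_ge0 x0) norm2_x0_sqr Hcond) as (l & m & Hl & Hm & Hg & Hval).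
  rewrite <- Hval; apply seq_cost_ge_certificate; assumption.
Qed.

Lemma seq_cost_ge_case2 (y1 y2 : pt) :
  seq_feasible (lin_clf w1) (lin_clf w2) y1 y2 ->
  d * Rabs (cos theta) + a * sin theta <= seq_cost x0 y1 y2.
Proof.
  intros Hy.
  assert (HC2 : Rabs (cos theta) * Rabs (cos theta) = cos theta * cos theta)
    by (rewrite <- Rabs_mult; apply Rabs_pos_eq; nra).
  replace (d * Rabs (cos theta) + a * sin theta)
    with ((Rabs (cos theta) + cos theta) * d + 1 * (a * sin theta - d * cos theta)) by ring.
  apply seq_cost_ge_certificate; [| lra | lra | exact Hy].
  pose proof (Rle_abs (- cos theta)); rewrite Rabs_Ropp in *; lra.
Qed.

Local Notation x1 := (vscale (1 - d / a * Rabs (tan theta)) p).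

Lemma case2_feasible : seq_feasible (lin_clf w1) (lin_clf w2) x1 (Pw w2 x1).
Proof.
  split.
  - apply lin_clf_1; rewrite dot_vscaler, dot_w1_p; lra.
  - apply lin_clf_Pw, Hw2.
Qed.

Lemma case2_seq_cost : cos theta <> 0 -> d * sin theta <= a * Rabs (cos theta) ->
  seq_cost x0 x1 (Pw w2 x1) = d * Rabs (cos theta) + a * sin theta.
Proof.
  intros HC Hcond.
  pose proof sin_pos as HS; pose proof sin_cos_sqr as HSC; pose proof a_pos as Ha.
  pose proof d_pos as Hd; pose proof (Rabs_pos_lt _ HC) as HmC.
  assert (HC2 : Rabs (cos theta) * Rabs (cos theta) = cos theta * cos theta)
    by (rewrite <- Rabs_mult; apply Rabs_pos_eq; nra).
  rewrite Rabs_tan by exact HS.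
  set (k := 1 - d / a * (sin theta / Rabs (cos theta))).
  assert (Hka : k * a = a - d * sin theta / Rabs (cos theta)) by (unfold k; field; lra).
  assert (Hka0 : 0 <= k * a).
  { rewrite Hka; apply (Rmult_le_reg_r (Rabs (cos theta))); [exact HmC|].
    replace ((a - d * sin theta / Rabs (cos theta)) * Rabs (cos theta))
      with (a * Rabs (cos theta) - d * sin theta) by (field; lra). lra. }
  assert (Hleg1 : norm2 (vsub (vscale k p) x0) = d / Rabs (cos theta)).
  { apply norm2_eq_of_sqr; [apply Rlt_le, Rdiv_lt_0_compat; lra|].
    rewrite vsub_x0.
    replace (vsub (vscale k p) p) with (vscale (k - 1) p)
      by (unfold vsub, vscale; simpl; f_equal; ring).
    rewrite !dot_vaddl, !dot_vaddr, !dot_vscalel, !dot_vscaler,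
      (dot_comm p w1), dot_w1_p, Hw1, <- norm2_sqr.
    replace ((k - 1) * ((k - 1) * (a * a)) + (k - 1) * (d * 0) + (d * ((k - 1) * 0) + d * (d * 1)))
      with ((k * a - a) * (k * a - a) + d * d) by ring.
    rewrite Hka; field_simplify_eq; [|lra].
    replace (Rabs (cos theta) ^ 2) with (1 - sin theta ^ 2) by nra; ring. }
  assert (Hleg2 : norm2 (vsub (Pw w2 (vscale k p)) (vscale k p)) = k * a * sin theta).
  { rewrite norm2_vsub_Pw, dw_nonpos by (try rewrite dot_vscaler, dot_w2_p; nra).
    rewrite dot_vscaler, dot_w2_p; ring. }
  unfold seq_cost; rewrite Hleg1, Hleg2, Hka.
  field_simplify_eq; [|lra].
  replace (Rabs (cos theta) ^ 2) with (1 - sin theta ^ 2) by nra; ring.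
Qed.

End Configuration.

Theorem mainTheorem13 (w1 w2 x0 : pt) (theta : R) :
  norm2 w1 = 1 -> norm2 w2 = 1 ->
  lin_clf w1 x0 = 0 ->
  lin_clf w2 (Pw w1 x0) = 0 ->
  0 < theta < PI ->
  cos theta = - dot w1 w2 ->
  (* case 1: |tan theta| > ||P_{w1}(x0)|| / d_{w1}(x0)
     (|tan theta| = +oo when cos theta = 0) *)
  ((cos theta = 0 \/ Rabs (tan theta) > norm2 (Pw w1 x0) / dw w1 x0) ->
     is_best_response (lin_clf w1) (lin_clf w2) x0 vzero vzero /\
     cseq_is (lin_clf w1) (lin_clf w2) x0 (norm2 x0)) /\
  (* case 2: |tan theta| <= ||P_{w1}(x0)|| / d_{w1}(x0) *)
  (cos theta <> 0 -> Rabs (tan theta) <= norm2 (Pw w1 x0) / dw w1 x0 ->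
     let x1 := vscale (1 - dw w1 x0 / norm2 (Pw w1 x0) * Rabs (tan theta))
                      (Pw w1 x0) in
     let x2 := Pw w2 x1 in
     is_best_response (lin_clf w1) (lin_clf w2) x0 x1 x2 /\
     cseq_is (lin_clf w1) (lin_clf w2) x0
       (dw w1 x0 * Rabs (cos theta) + norm2 (Pw w1 x0) * sin theta)).
Proof.
  intros Hw1 Hw2 Hx0 Hpx0 Htheta Hcos.
  apply dot_unit in Hw1, Hw2; apply lin_clf_0 in Hx0, Hpx0.
  pose proof (d_pos w1 x0 Hx0) as Hd; pose proof (sin_pos theta Htheta) as HS.
  split.
  - intros Hcase; apply lt_of_Rabs_tan_gt in Hcase; [|exact Hd|exact HS].
    apply best_response_of_lower_bound; [| apply seq_cost_vzero |].
    + split; apply lin_clf_1; rewrite dot_vzeror; lra.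
    + intros y1 y2; apply (norm2_x0_le_seq_cost _ _ _ theta); assumption.
  - intros HC Hcase x1 x2; apply le_of_Rabs_tan_le in Hcase; [|exact Hd|exact HS|exact HC].
    subst x1 x2; apply best_response_of_lower_bound.
    + apply case2_feasible; assumption.
    + apply case2_seq_cost; assumption.
    + intros y1 y2; apply seq_cost_ge_case2; assumption.
Qed.
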